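(* Let $(u,g,r)$ be a symmetric RUM-CF and let $(p,f)$ be an SCF-RT generated by it, i.e. rationalized by $(u,g,r)$. Then for any $(x,y)\in D$, with $q=p(x,y)/p(y,x)$: if $u(x)\geq u(y)$ then $F(y,x)$ $q$-FSD $F(x,y)$, and if $u(x)>u(y)$ then $F(y,x)$ $q$-SFSD $F(x,y)$.
   Context: $X$ is a finite set of options; $C=\{(x,y): x,y\in X,\ x\neq y\}$; $D\subseteq C$ is a fixed non-empty set with $(x,y)\in D\Rightarrow (y,x)\in D$. An SCF $p$ assigns to each $(x,y)\in D$ a number $p(x,y)>0$ with $p(x,y)+p(y,x)=1$. An SCF-RT is a pair $(p,f)$ where $p$ is an SCF and $f$ assigns to each $(x,y)\in D$ a strictly positive density $f(x,y)$ on $\mathbb{R}^+$ with cdf $F(x,y)$. A RUM is a pair $(u,g)$ with $u:X\to\mathbb{R}$ and $g$ assigning to each $(x,y)\in C$ a density $g(x,y)$ on $\mathbb{R}$ (cdf $G(x,y)$) with $\int v\,g(x,y)(v)\,dv=u(x)-u(y)=:v(x,y)$, $g(x,y)(v)=g(y,x)(-v)$ for all $v$, and connected support. A RUM-CF is $(u,g,r)$ with $(u,g)$ a RUM and $r:\mathbb{R}^{++}\to\mathbb{R}^+$ continuous, strictly decreasing where $r(v)>0$, $\lim_{v\to0}r(v)=\infty$, $\lim_{v\to\infty}r(v)=0$; $r^{-1}(t)$ ($t>0$) is the inverse of $r$ restricted to $\{r>0\}$. It rationalizes $(p,f)$ if for all $(x,y)\in D$: $G(x,y)(0)=p(y,x)$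 and $\frac{1-G(x,y)(r^{-1}(t))}{1-G(x,y)(0)}=F(x,y)(t)$ for all $t>0$. It is symmetric if $g(x,y)(v(x,y)+\delta)=g(x,y)(v(x,y)-\delta)$ for all $(x,y)\in C$, $\delta\geq0$. For cdfs $G,H$ on $\mathbb{R}^+$ and $q>0$, $G$ $q$-FSD $H$ means $G(t)\leq qH(t)$ for all $t\geq0$; $q$-SFSD means additionally strict inequality for some $t$. *)

From HB Require Import structures.
From mathcomp Require Import all_boot all_order all_algebra.
From mathcomp Require Import all_classical all_reals all_analysis.
Set Implicit Arguments. Unset Strict Implicit. Unset Printing Implicit Defensive.
Import Order.TTheory GRing.Theory Num.Theory.
Import numFieldNormedType.Exports.
Local Open Scope classical_set_scope.
Local Open Scope ring_scope.

Section Defs.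
Variable R : realType.
Local Notation mu := (@lebesgue_measure R).

Definition cdfR (g : R -> R) (t : R) : R :=
  fine (\int[mu]_(v in `]-oo, t]) (g v)%:E)%E.

Definition cdfRp (f : R -> R) (t : R) : R :=
  fine (\int[mu]_(v in `[0%R, t]) (f v)%:E)%E.

Definition density_R (g : R -> R) : Prop :=
  measurable_fun setT g /\ (forall v, 0 <= g v) /\
  (\int[mu]_(v in setT) (g v)%:E = 1)%E.

Definition pos_density_Rp (f : R -> R) : Prop :=
  measurable_fun (`[0%R, +oo[ : set R) f /\ (forall t, 0 <= t -> 0 < f t) /\
  (\int[mu]_(t in `[0%R, +oo[) (f t)%:E = 1)%E.

Definition dsupport (g : R -> R) : set R := closure [set v | 0 < g v].

Definition inC (X : finType) (x y : X) : Prop := x <> y.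

Definition valid_D (X : finType) (D : {set X * X}) : Prop :=
  (exists xy, xy \in D) /\
  (forall x y, (x, y) \in D -> x <> y) /\
  (forall x y, (x, y) \in D -> (y, x) \in D).

Definition is_SCF (X : finType) (D : {set X * X}) (p : X -> X -> R) : Prop :=
  forall x y, (x, y) \in D -> 0 < p x y /\ p x y + p y x = 1.

Definition is_SCF_RT (X : finType) (D : {set X * X}) (p : X -> X -> R)
  (f : X -> X -> R -> R) : Prop :=
  is_SCF D p /\ forall x y, (x, y) \in D -> pos_density_Rp (f x y).

Definition is_RUM (X : finType) (u : X -> R) (g : X -> X -> R -> R) : Prop :=
  forall x y : X, inC x y ->
    density_R (g x y) /\
    mu.-integrable setT (fun v => (v * g x y v)%:E) /\
    (\int[mu]_(v in setT) (v * g x y v)%:E = (u x - u y)%:E)%E /\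
    (forall v, g x y v = g y x (- v)) /\
    connected (dsupport (g x y)).

Definition is_CF (r : R -> R) : Prop :=
  (forall v, 0 < v -> 0 <= r v) /\
  {within `]0, +oo[, continuous r} /\
  (forall a b, 0 < a -> a < b -> 0 < r a -> 0 < r b -> r b < r a) /\
  (r x @[x --> 0^'+] --> +oo) /\
  (r x @[x --> +oo] --> 0).

Definition is_RUM_CF (X : finType) (u : X -> R) (g : X -> X -> R -> R)
  (r : R -> R) : Prop := is_RUM u g /\ is_CF r.

(* (u,g,r) rationalizes (p,f).  r^{-1}(t) for t > 0 is the (unique) v > 0
   with r v = t, so the condition is stated for every such v. *)
Definition rationalizes (X : finType) (D : {set X * X}) (u : X -> R)
  (g : X -> X -> R -> R) (r : R -> R) (p : X -> X -> R)
  (f : X -> X -> R -> R) : Prop :=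
  forall x y, (x, y) \in D ->
    cdfR (g x y) 0 = p y x /\
    (forall t v, 0 < t -> 0 < v -> r v = t ->
       (1 - cdfR (g x y) v) / (1 - cdfR (g x y) 0) = cdfRp (f x y) t).

Definition symmetric_RUM (X : finType) (u : X -> R) (g : X -> X -> R -> R) : Prop :=
  forall x y : X, inC x y -> forall d, 0 <= d ->
    g x y ((u x - u y) + d) = g x y ((u x - u y) - d).

Definition qFSD (G H : R -> R) (q : R) : Prop :=
  forall t, 0 <= t -> G t <= q * H t.
Definition qSFSD (G H : R -> R) (q : R) : Prop :=
  qFSD G H q /\ exists t, 0 <= t /\ G t < q * H t.

End Defs.

(* Symmetry of g(x,y) about w := u(x) - u(y), combined with g(y,x)(v) = g(x,y)(-v),
   makes g(y,x) the translate of g(x,y) by 2w, so G(y,x)(v) = G(x,y)(v + 2w).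
   Writing t = r(v), the rationalization identities turn this into
   q F(x,y)(t) - F(y,x)(t) = (G(x,y)(v + 2w) - G(x,y)(v)) / p(y,x),
   which is nonnegative when w >= 0.  When w > 0 it is positive for small v,
   because G(x,y) is strictly increasing wherever r > 0: there it mirrors the
   cdf F(x,y), whose density is positive. *)
From HB Require Import structures.
From mathcomp Require Import all_boot all_order all_algebra.
From mathcomp Require Import all_classical all_reals all_analysis measurable_realfun.
From mathcomp Require Import ring lra.
Import Order.TTheory GRing.Theory Num.Theory.
Import numFieldNormedType.Exports.
Local Open Scope classical_set_scope.
Local Open Scope ring_scope.

Section integral_gt0.
Context d (T : measurableType d) (R : realType) (mu : {measure set T -> \bar R}).

Lemma integral_gt0 (D : set T) (f : T -> R) : measurable D ->
  measurable_fun D f -> (forall x, D x -> 0 < f x) -> (0 < mu D)%E ->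
  (0 < \int[mu]_(x in D) (f x)%:E)%E.
Proof.
move=> mD mf f0 muD; rewrite lt0e integral_ge0 ?andbT; last first.
  by move=> x Dx; rewrite lee_fin ltW // f0.
apply/negP => /eqP intf0.
have mEf : measurable_fun D (EFin \o f) by exact/measurable_EFinP.
have /(ae_eq_integral_abs _ mD mEf).1 [N [mN N0 DfN]] :
    (\int[mu]_(x in D) `|(EFin \o f) x| = 0)%E.
  rewrite -intf0; apply: eq_integral => x /[!inE] Dx.
  by rewrite /= ger0_norm // ltW // f0.
suff : (mu D <= mu N)%E by rewrite N0 leNgt muD.
apply: le_measure; rewrite ?inE // => x Dx; apply: DfN => /(_ Dx) /eqP.
by rewrite eqe gt_eqF // f0.
Qed.

End integral_gt0.

Section lebesgue_translation.
Context {R : realType}.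
Local Notation mu := (@lebesgue_measure R).

Lemma measurable_addr (c : R) : measurable_fun [set: measurableTypeR R]
  ((fun x => x + c) : measurableTypeR R -> measurableTypeR R).
Proof. by apply: measurable_funD => //; exact: measurable_cst. Qed.

Lemma lebesgue_measureD (c : R) (A : set R) : measurable A ->
  pushforward mu ((fun x => x + c) : _ -> measurableTypeR R) A = mu A.
Proof.
move=> mA; have mc := measurable_addr c.
apply/esym/lebesgue_measure_unique => //= _ [[a b]] _ <-; rewrite /pushforward.
have -> : (fun x => x + c) @^-1` `]a, b] = `](a - c), (b - c)]%classic.
  by apply/seteqP; split => z /=; rewrite !in_itv /= ?lerBrDr ?ltrBlDr.
rewrite !lebesgue_measure_itv /= !lte_fin ltrD2r.
by case: ifP => // _; congr EFin; lra.
Qed.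

Lemma ge0_integral_itvNy_shift (h : R -> R) (c v : R) :
  measurable_fun [set: R] h -> (forall x, 0 <= h x) ->
  (\int[mu]_(s in `]-oo, v]) (h (s + c))%:E =
   \int[mu]_(s in `]-oo, (v + c)%R]) (h s)%:E)%E.
Proof.
move=> mh h0.
have -> : `]-oo, v]%classic =
    ((fun x => x + c) : _ -> measurableTypeR R) @^-1` `]-oo, (v + c)].
  by apply/seteqP; split => z /=; rewrite !in_itv /= lerD2r.
rewrite -(ge0_integral_pushforward (measurable_addr c) mu
  (D := `]-oo, (v + c)%R]%classic) (f := fun s => (h s)%:E)) //=.
- apply: eq_measure_integral => //= [A mA|_ A mA _]; first exact: measurable_addr.
  by rewrite -(lebesgue_measureD c).
- exact/measurable_EFinP/measurable_funTS.
- by move=> y _; rewrite lee_fin.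
Qed.

End lebesgue_translation.

Section cdf.
Context {R : realType}.
Local Notation mu := (@lebesgue_measure R).

Lemma cdfR_fin_num (h : R -> R) (v : R) : density_R h ->
  (\int[mu]_(s in `]-oo, v]) (h s)%:E)%E \is a fin_num.
Proof.
case=> mh [h0 h1]; rewrite ge0_fin_numE; last first.
  by apply: integral_ge0 => *; rewrite lee_fin.
rewrite (le_lt_trans _ (ltey 1%E)) // -h1.
apply: ge0_subset_integral => //=; first exact/measurable_EFinP.
by move=> *; rewrite lee_fin.
Qed.

Lemma le_cdfR (h : R -> R) (a b : R) : density_R h -> a <= b ->
  cdfR h a <= cdfR h b.
Proof.
move=> dh ab; apply: fine_le; [exact: cdfR_fin_num..|].
case: dh => mh [h0 _]; apply: ge0_subset_integral => //=.
- exact/measurable_EFinP/measurable_funTS.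
- by move=> *; rewrite lee_fin.
- by move=> z /=; rewrite !in_itv /= => /le_trans; apply.
Qed.

Lemma cdfRp0 (f : R -> R) : cdfRp f 0 = 0.
Proof. by rewrite /cdfRp set_itv1 integral_set1. Qed.

Lemma cdfRp_fin_num (f : R -> R) (t : R) : pos_density_Rp f ->
  (\int[mu]_(s in `[0%R, t]) (f s)%:E)%E \is a fin_num.
Proof.
case=> mf [f0 f1]; have Ef0 s : 0 <= s -> (0 <= (f s)%:E)%E.
  by move=> s0; rewrite lee_fin ltW // f0.
rewrite ge0_fin_numE; last first.
  by apply: integral_ge0 => s; rewrite /= in_itv /= => /andP[/Ef0].
rewrite (le_lt_trans _ (ltey 1%E)) // -f1.
apply: ge0_subset_integral => //=; first exact/measurable_EFinP.
- by move=> s; rewrite /= in_itv /= andbT => /Ef0.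
- by move=> s /=; rewrite !in_itv /= => /andP[->].
Qed.

Lemma lt_cdfRp (f : R -> R) (s t : R) : pos_density_Rp f -> 0 <= s -> s < t ->
  cdfRp f s < cdfRp f t.
Proof.
move=> df s0 st; apply: fine_lt; [exact: cdfRp_fin_num..|].
case: (df) => mf [f0 _].
have split_itv : `[0%R, t]%classic = `[0%R, s] `|` `]s, t].
  apply/seteqP; split => z /=; rewrite !in_itv /=; last by case=> /andP; lra.
  by case/andP=> z0 zt; case: (leP z s) => zs; [left|right]; apply/andP.
rewrite split_itv ge0_integral_setU //=; first last.
- by apply/disj_setPS => z [] /=; rewrite !in_itv /=; lra.
- by move=> z; rewrite !in_itv /= => -[] /andP[z0 _]; rewrite lee_fin ltW // f0; lra.
- apply/measurable_EFinP; apply: measurable_funS mf => // z /= [];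
  by rewrite !in_itv /=; lra.
rewrite lteDl; last exact: cdfRp_fin_num.
apply: integral_gt0 => //.
- by apply: measurable_funS mf => // z /=; rewrite !in_itv /=; lra.
- by move=> z /=; rewrite in_itv /= => /andP[sz _]; apply: f0; lra.
- rewrite [X in (0 < X)%E](@lebesgue_measure_itv R) /= lte_fin st.
  by rewrite -EFinD lte_fin subr_gt0.
Qed.

End cdf.

Section choice_function.
Context {R : realType} {r : R -> R}.
Hypothesis cf : is_CF r.

Lemma is_CF_preimage (t : R) : 0 < t -> exists2 v, 0 < v & r v = t.
Proof.
case: cf => _ [rc [_ [r0 roo]]] t0.
have [a [a0 tra]] : exists a, 0 < a /\ t < r a.
  apply: (@filter_ex _ (0^'+)); near=> a.
  by split; near: a; [exact: nbhs_right_gt|exact: cvgry_gt].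
have [b [ab rbt]] : exists b, a < b /\ r b < t.
  apply: (@filter_ex _ +oo%R); near=> b; split; near: b.
  - by apply: nbhs_pinfty_gt; exact: num_real.
  - exact: cvgr_lt roo _ t0.
have rc_ab : {within `[a, b], continuous r}.
  by apply: continuous_subspaceW rc => z /=; rewrite !in_itv /= andbT => /andP[az _]; lra.
have t_between : Num.min (r a) (r b) <= t <= Num.max (r a) (r b).
  by rewrite ge_min le_max; apply/andP; split; apply/orP; [right|left]; lra.
have [v] := IVT (ltW ab) rc_ab t_between.
by rewrite in_itv /= => /andP[av _] rv; exists v => //; lra.
Unshelve. all: by end_near.
Qed.

Lemma is_CF_gt0_near0 (e : R) : 0 < e -> exists v, [/\ 0 < v, v < e & 0 < r v].
Proof.
case: cf => _ [_ [_ [r0 _]]] e0; apply: (@filter_ex _ (0^'+)).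
near=> v; split; near: v; [exact: nbhs_right_gt|exact: nbhs_right_lt|exact: cvgry_gt].
Unshelve. all: by end_near.
Qed.

End choice_function.

Lemma reflect_symmetric {R : realFieldType} (h : R -> R) (w s : R) :
  (forall d, 0 <= d -> h (w + d) = h (w - d)) -> h (- s) = h (s + 2 * w).
Proof.
move=> hsym; have [sw0|sw0] := leP 0 (s + w).
  have -> : s + 2 * w = w + (s + w) by lra.
  by rewrite hsym //; congr h; lra.
have -> : - s = w + - (s + w) by lra.
by rewrite hsym; [congr h; lra | lra].
Qed.

Section rationalized.
Context {R : realType} {X : finType} {D : {set X * X}} {p : X -> X -> R}
  {f : X -> X -> R -> R} {u : X -> R} {g : X -> X -> R -> R} {r : R -> R}.
Hypotheses (vD : valid_D D) (scf : is_SCF D p) (rum : is_RUM u g)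
  (sym : symmetric_RUM u g) (rat : rationalizes D u g r p f).

Lemma cdfR_swap (x y : X) (v : R) : x <> y ->
  cdfR (g y x) v = cdfR (g x y) (v + 2 * (u x - u y)).
Proof.
move=> xy; have [[mg [g0 _]] [_ [_ [gN _]]]] := rum x y xy.
rewrite /cdfR -ge0_integral_itvNy_shift //; congr fine; apply: eq_integral => s _.
by rewrite -reflect_symmetric; [rewrite gN opprK | exact: sym].
Qed.

Lemma cdfRp_rationalized (x y : X) (t v : R) : (x, y) \in D ->
  0 < t -> 0 < v -> r v = t -> cdfRp (f x y) t = (1 - cdfR (g x y) v) / p x y.
Proof.
move=> xyD t0 v0 rv; have [G0 ratxy] := rat x y xyD.
have [_ pxy1] := scf x y xyD.
by rewrite -(ratxy t v) // G0 (_ : 1 - p y x = p x y) //; lra.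
Qed.

Lemma cdfRp_gap (x y : X) (t v : R) : (x, y) \in D ->
  0 < t -> 0 < v -> r v = t ->
  p x y / p y x * cdfRp (f x y) t - cdfRp (f y x) t =
  (cdfR (g x y) (v + 2 * (u x - u y)) - cdfR (g x y) v) / p y x.
Proof.
move=> xyD t0 v0 rv; have yxD := vD.2.2 x y xyD.
have [pxy0 _] := scf x y xyD; have [pyx0 _] := scf y x yxD.
rewrite !(cdfRp_rationalized _ _ _ _ _ t0 v0 rv) // (cdfR_swap x).
  by field; rewrite !gt_eqF.
exact: vD.2.1 x y xyD.
Qed.

Lemma lt_cdfR_rationalized (x y : X) (a b : R) : (x, y) \in D ->
  is_CF r -> pos_density_Rp (f x y) -> 0 < a -> a < b -> 0 < r a -> 0 < r b ->
  cdfR (g x y) a < cdfR (g x y) b.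
Proof.
move=> xyD [_ [_ [rdec _]]] fxy a0 ab ra rb; have [pxy0 _] := scf x y xyD.
have := lt_cdfRp _ _ _ fxy (ltW rb) (rdec a b a0 ab ra rb).
rewrite !(cdfRp_rationalized _ _ _ _ _ _ _ erefl) //; last exact: lt_trans ab.
by rewrite ltr_pM2r ?invr_gt0 //; lra.
Qed.

End rationalized.

Theorem proposition4 (R : realType) (X : finType) (D : {set X * X})
  (p : X -> X -> R) (f : X -> X -> R -> R)
  (u : X -> R) (g : X -> X -> R -> R) (r : R -> R) :
  valid_D D ->
  is_SCF_RT D p f ->
  is_RUM_CF u g r ->
  symmetric_RUM u g ->
  rationalizes D u g r p f ->
  forall x y, (x, y) \in D ->
    let q := p x y / p y x in
    (u y <= u x -> qFSD (cdfRp (f y x)) (cdfRp (f x y)) q) /\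
    (u y < u x -> qSFSD (cdfRp (f y x)) (cdfRp (f x y)) q).
Proof.
move=> vD [scf fdens] [rum cf] sym rat x y xyD q.
have [pyx0 _] := scf y x (vD.2.2 x y xyD).
have dg := (rum x y (vD.2.1 x y xyD)).1.
have gap t v := cdfRp_gap vD scf rum sym rat x y t v xyD.
have fsd : u y <= u x -> qFSD (cdfRp (f y x)) (cdfRp (f x y)) q.
  move=> uyx t; rewrite le_eqVlt => /orP[/eqP <-|t0]; first by rewrite !cdfRp0 mulr0.
  have [v v0 rv] := is_CF_preimage cf t t0.
  rewrite -subr_ge0 /q (gap t v) // divr_ge0 ?(ltW pyx0) // subr_ge0.
  by apply: le_cdfR => //; lra.
split=> // uyx; split; first exact/fsd/ltW.
have w0 : 0 < u x - u y by rewrite subr_gt0.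
have [b [b0 bw rb]] := is_CF_gt0_near0 cf (u x - u y) w0.
have [a [a0 ab ra]] := is_CF_gt0_near0 cf b b0.
exists (r a); split; first exact: ltW.
rewrite -subr_gt0 /q (gap (r a) a) // divr_gt0 // subr_gt0.
have Gab := lt_cdfR_rationalized scf rat x y a b xyD cf (fdens x y xyD) a0 ab ra rb.
rewrite (lt_le_trans Gab) //.
by apply: le_cdfR => //; lra.
Qed.
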